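(* For $k\in\{0,1,\dots,N\}$ let $$\Delta_{\mathrm{bin}}(k)=\inf_{\tau\ge 0}\Big[k\int_{-\infty}^{\tau}(u-\tau)^2\phi(u)\,du+(N-k)\int_{\tau}^{\infty}(u-\tau)^2\phi(u)\,du\Big],\qquad \phi(u)=(2\pi)^{-1/2}e^{-u^2/2}.$$ Then (i) $\Delta_{\mathrm{bin}}(k)<N/2$ for all $0\le k<N/2$, and (ii) $\Delta_{\mathrm{bin}}(k)=N/2$ for all $N/2\le k\le N$. *)

From HB Require Import structures.
From mathcomp Require Import all_boot all_order all_algebra.
From mathcomp Require Import all_classical all_reals all_analysis.
Set Implicit Arguments. Unset Strict Implicit. Unset Printing Implicit Defensive.
Import Order.TTheory GRing.Theory Num.Theory.
Local Open Scope classical_set_scope.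
Local Open Scope ring_scope.

Definition phi {R : realType} (u : R) : R :=
  (Num.sqrt (2 * pi))^-1 * expR (- (u ^+ 2) / 2).

Definition bin_obj {R : realType} (N k : nat) (tau : R) : R :=
  k%:R * Rintegral lebesgue_measure `]-oo, tau] (fun u => (u - tau) ^+ 2 * phi u)
  + (N%:R - k%:R) * Rintegral lebesgue_measure `[tau, +oo[ (fun u => (u - tau) ^+ 2 * phi u).

Definition Delta_bin {R : realType} (N k : nat) : R :=
  inf [set bin_obj N k tau | tau in [set t : R | 0 <= t]].

(* Let A(t) and B(t) be the integrals of (u - t)^2 phi(u) below and above t.
   Since the standard Gaussian has mean 0 and variance 1, A(t) + B(t) = 1 + t^2,
   and A(0) = B(0) = 1/2 by symmetry.  For t >= 0 both the integrand and the
   domain of A grow, so A(t) >= 1/2; hence if 2k >= N the objective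
   k A + (N - k) B = (N - k)(1 + t^2) + (2k - N) A is at least N/2, with equality
   at t = 0.  If 2k < N, enlarging the domain of B to [0, +oo[ gives
   B(t) <= (1 + t^2)/2 - 2 t phi(0), so the objective is at most
   N/2 + N t^2/2 - 2 t phi(0) (N - 2k), which is below N/2 at
   t = 2 phi(0) (N - 2k) / N. *)

From HB Require Import structures.
From mathcomp Require Import all_boot all_order all_algebra.
From mathcomp Require Import all_classical all_reals all_analysis.
From mathcomp Require Import ring lra.
From mathcomp Require Import measurable_realfun.
Import Order.TTheory GRing.Theory Num.Theory.
Import numFieldNormedType.Exports.
Local Open Scope classical_set_scope.
Local Open Scope ring_scope.

Lemma mul_expRN_le1 {R : realType} (y : R) : y * expR (- y) <= 1.
Proof.
have y_le_expR : y <= expR y by rewrite (le_trans _ (expR_ge1Dx y)) // lerDr.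
have := ler_wpM2r (expR_ge0 (- y)) y_le_expR.
by rewrite -expRD subrr expR0.
Qed.

Section gaussian_density.
Context {R : realType}.

Lemma phi_gt0 (u : R) : 0 < phi u.
Proof. by rewrite /phi mulr_gt0 ?expR_gt0 // invr_gt0 sqrtr_gt0 mulr_gt0 ?pi_gt0. Qed.

Lemma phi_ge0 (u : R) : 0 <= phi u.
Proof. exact/ltW/phi_gt0. Qed.

Lemma phiN (u : R) : phi (- u) = phi u.
Proof. by rewrite /phi sqrrN. Qed.

Lemma phi_normal_pdf : @phi R = normal_pdf 0 1.
Proof.
apply/funext => u.
rewrite /normal_pdf oner_eq0 /= /normal_peak /normal_fun /phi subr0 expr1n mul1r.
by rewrite -[pi *+ 2]mulr_natr [pi * _]mulrC.
Qed.

Lemma is_derive_phi (x : R) : is_derive x 1 (@phi R) (- x * phi x).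
Proof.
have : is_derive x 1 (fun u : R => - u ^+ 2 / 2) (- x).
  have -> : (fun u : R => - u ^+ 2 / 2) = (fun u => (- 2^-1) *: u ^+ 2).
    by apply/funext => u; rewrite /GRing.scale /=; ring.
  by apply: is_derive_eq; rewrite /GRing.scale /=; field.
have -> : @phi R =
    (fun u => (Num.sqrt (2 * pi))^-1 *: (expR \o (fun u => - u ^+ 2 / 2)) u) by [].
by move=> ?; apply: is_derive_eq; rewrite /GRing.scale /=; ring.
Qed.

Lemma is_derive_mulphi (x : R) :
  is_derive x 1 (fun u => u * phi u) ((1 - x ^+ 2) * phi x).
Proof.
have := is_derive_phi x => ?.
by apply: is_derive_eq; rewrite /GRing.scale /=; ring.
Qed.

Lemma continuous_phi : continuous (@phi R).
Proof.
move=> x; have [+ _] := is_derive_phi x.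
by move=> /derivable1_diffP/differentiable_continuous.
Qed.

Lemma continuous_mulphi : continuous (fun u : R => u * phi u).
Proof.
move=> x; have [+ _] := is_derive_mulphi x.
by move=> /derivable1_diffP/differentiable_continuous.
Qed.

Lemma continuous_mulphil (p : R -> R) :
  continuous p -> continuous (fun u => p u * phi u).
Proof. by move=> cp x; apply: cvgM; [exact: cp | exact: continuous_phi]. Qed.

(* From [y e^-y <= 1] at [y = u^2/2]: [u phi u <= 2 phi 0 / u]. *)
Lemma mulphi_cvgy : (fun u => u * phi u) x @[x --> +oo] --> (0 : R).
Proof.
apply/cvgrPdist_le => e e0; near=> u.
have u0 : 0 < u by near: u; apply: nbhs_pinfty_gt; rewrite num_real.
have ue : 2 * phi 0 / e <= u by near: u; apply: nbhs_pinfty_ge; rewrite num_real.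
rewrite sub0r normrN ger0_norm; last by rewrite mulr_ge0 ?phi_ge0 ?ltW.
have := mul_expRN_le1 (u ^+ 2 / 2).
have -> : phi u = phi 0 * expR (- (u ^+ 2 / 2)).
  by rewrite /phi expr0n /= oppr0 mul0r expR0 mulr1 mulNr.
have c0 := phi_gt0 0; have E0 := expR_gt0 (- (u ^+ 2 / 2)).
rewrite ler_pdivrMr // in ue.
move: ue c0 E0; set c := phi 0; set E := expR _ => ue c0 E0 uE.
have : u ^+ 2 * (c * E) <= u * e by nra.
nra.
Unshelve. all: by end_near. Qed.

Lemma phi_cvgy : phi x @[x --> +oo] --> (0 : R).
Proof.
apply: (@squeeze_cvgr _ _ _ _ (fun=> 0) (fun u => u * phi u)).
- near=> u; rewrite phi_ge0 /=.
  have u1 : 1 <= u by near: u; apply: nbhs_pinfty_ge; rewrite num_real.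
  by rewrite ler_peMl ?phi_ge0.
- exact: cvg_cst.
- exact: mulphi_cvgy.
Unshelve. all: by end_near. Qed.

End gaussian_density.

Section integrals_of_continuous_functions.
Context {R : realType}.
Notation mu := (@lebesgue_measure R).
Local Open Scope ereal_scope.

Lemma continuous_measurable_EFin (g : R -> R) (D : set R) :
  continuous g -> measurable_fun D (EFin \o g).
Proof.
move=> cg; apply/measurable_EFinP; apply: measurable_funTS.
exact: continuous_measurable_fun.
Qed.

Lemma ge0_integral_itv_split (g : R -> R) (a b : itv_bound R) (c : R) :
  (a <= BLeft c)%O -> (BLeft c <= b)%O ->
  continuous g -> (forall x, 0 <= g x)%R ->
  \int[mu]_(x in [set` Interval a b]) (g x)%:E =
  \int[mu]_(x in [set` Interval a (BRight c)]) (g x)%:E +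
  \int[mu]_(x in [set` Interval (BLeft c) b]) (g x)%:E.
Proof.
move=> ac cb cg g0; rewrite (itv_bndbnd_setU ac cb) ge0_integral_setU //=.
- by rewrite integral_itv_bndo_bndc //; exact: continuous_measurable_EFin.
- exact: continuous_measurable_EFin.
- by move=> x _; rewrite lee_fin.
- apply: lt_disjoint => x y; rewrite !itv_boundlr => /andP[_ xc] /andP[cy _].
  by rewrite bnd_simp in xc cy; exact: lt_le_trans xc cy.
Qed.

Lemma ge0_integralD_continuous (D : set R) (f g : R -> R) :
  measurable D -> continuous f -> continuous g ->
  (forall x, D x -> 0 <= f x)%R -> (forall x, D x -> 0 <= g x)%R ->
  \int[mu]_(x in D) (f x + g x)%:E =
  \int[mu]_(x in D) (f x)%:E + \int[mu]_(x in D) (g x)%:E.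
Proof.
move=> mD cf cg f0 g0; under eq_integral do rewrite EFinD.
by rewrite ge0_integralD //=; exact: continuous_measurable_EFin.
Qed.

Lemma ge0_integralD_scaled (D : set R) (f g : R -> R) (a b : R) :
  measurable D -> continuous f -> continuous g ->
  (forall x, D x -> 0 <= f x)%R -> (forall x, D x -> 0 <= g x)%R ->
  (0 <= a)%R -> (0 <= b)%R ->
  \int[mu]_(x in D) (a * f x + b * g x)%:E =
  a%:E * \int[mu]_(x in D) (f x)%:E + b%:E * \int[mu]_(x in D) (g x)%:E.
Proof.
move=> mD cf cg f0 g0 a0 b0.
rewrite ge0_integralD_continuous //; last 4 first.
- by move=> x; apply: cvgM; [exact: cvg_cst | exact: cf].
- by move=> x; apply: cvgM; [exact: cvg_cst | exact: cg].
- by move=> x Dx; rewrite mulr_ge0 ?f0.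
- by move=> x Dx; rewrite mulr_ge0 ?g0.
under eq_integral do rewrite EFinM.
under [X in _ + X]eq_integral do rewrite EFinM.
by rewrite !ge0_integralZl //=; exact: continuous_measurable_EFin.
Qed.

End integrals_of_continuous_functions.

Section gaussian_integrals.
Context {R : realType}.
Notation mu := (@lebesgue_measure R).
Local Open Scope ereal_scope.

Lemma integral_phi_half : \int[mu]_(x in `[0%R, +oo[) (phi x)%:E = (2^-1)%:E.
Proof.
have : \int[mu]_x (phi x)%:E = 1 by rewrite phi_normal_pdf integral_normal_pdf.
rewrite ge0_symfun_integralT -?set_itvcy; last 3 first.
- exact: phi_ge0.
- exact: continuous_phi.
- by move=> x /=; rewrite phiN.
have : 0 <= \int[mu]_(x in `[0%R, +oo[) (phi x)%:E.
  by apply: integral_ge0 => x _; rewrite lee_fin phi_ge0.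
case: (\int[mu]_(x in _) _) => [r | | ] //= _; last by rewrite mulry gtr0_sg // mul1e.
by rewrite -EFinM => -[h]; congr EFin; lra.
Qed.

Lemma integral_mulphi : \int[mu]_(x in `[0%R, +oo[) (x * phi x)%:E = (phi 0)%:E.
Proof.
have dF (x : R) : is_derive x 1%R (fun u => - phi u)%R (x * phi x)%R.
  by have := is_derive_phi x => ?; apply: is_derive_eq; rewrite mulNr opprK.
rewrite (@ge0_continuous_FTC2y _ _ (fun u => - phi u)%R 0 0).
- by rewrite sub0e EFinN oppeK.
- by move=> x x0; rewrite mulr_ge0 ?phi_ge0.
- exact/continuous_subspaceT/continuous_mulphi.
- by rewrite -oppr0; apply: cvgN; exact: phi_cvgy.
- by move=> x _; have [] := dF x.
- by apply: cvg_at_right_filter; apply: cvgN; exact: continuous_phi.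
- by move=> x _; rewrite derive1E; have [_ ->] := dF x.
Qed.

Lemma integral_sqr_sub1_phi_1y :
  \int[mu]_(x in `[1%R, +oo[) ((x ^+ 2 - 1) * phi x)%:E = (phi 1)%:E.
Proof.
have dF (x : R) : is_derive x 1%R (fun u => - (u * phi u))%R ((x ^+ 2 - 1) * phi x)%R.
  by have := is_derive_mulphi x => ?; apply: is_derive_eq; rewrite -mulNr opprB.
rewrite (@ge0_continuous_FTC2y _ _ (fun u => - (u * phi u))%R 1 0).
- by rewrite sub0e EFinN oppeK mul1r.
- by move=> x x1; rewrite mulr_ge0 ?phi_ge0 // subr_ge0; nra.
- apply/continuous_subspaceT/continuous_mulphil => x.
  by apply: cvgB; [exact: exprn_continuous | exact: cvg_cst].
- by rewrite -oppr0; apply: cvgN; exact: mulphi_cvgy.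
- by move=> x _; have [] := dF x.
- by apply: cvg_at_right_filter; apply: cvgN; exact: continuous_mulphi.
- by move=> x _; rewrite derive1E; have [_ ->] := dF x.
Qed.

Lemma integral_1_sub_sqr_phi_01 :
  \int[mu]_(x in `[0%R, 1%R]) ((1 - x ^+ 2) * phi x)%:E = (phi 1)%:E.
Proof.
rewrite (@continuous_FTC2 _ _ (fun u => u * phi u)%R) //.
- by rewrite mul1r mul0r sube0.
- apply/continuous_subspaceT/continuous_mulphil => x.
  by apply: cvgB; [exact: cvg_cst | exact: exprn_continuous].
- split.
  + by move=> x _; have [] := is_derive_mulphi x.
  + by apply: cvg_at_right_filter; exact: continuous_mulphi.
  + by apply: cvg_at_left_filter; exact: continuous_mulphi.
- by move=> x _; rewrite derive1E; have [_ ->] := is_derive_mulphi x.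
Qed.

Lemma continuous_sqr_phi : continuous (fun x : R => x ^+ 2 * phi x)%R.
Proof. by apply: continuous_mulphil => x; exact: exprn_continuous. Qed.

(* Integrate (1 - u^2) phi u = (u phi u)' separately on [0, 1] and [1, +oo[,
   where it keeps a constant sign. *)
Lemma integral_sqr_phi_half :
  \int[mu]_(x in `[0%R, +oo[) (x ^+ 2 * phi x)%:E = (2^-1)%:E.
Proof.
have sqr_phi_ge0 (x : R) : (0 <= x ^+ 2 * phi x)%R by rewrite mulr_ge0 ?sqr_ge0 ?phi_ge0.
have c_sqr_sub1 : continuous (fun x : R => x ^+ 2 - 1)%R.
  by move=> x; apply: cvgB; [exact: exprn_continuous | exact: cvg_cst].
have c_1_sub_sqr : continuous (fun x : R => 1 - x ^+ 2)%R.
  by move=> x; apply: cvgB; [exact: cvg_cst | exact: exprn_continuous].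
have tail : \int[mu]_(x in `[1%R, +oo[) (x ^+ 2 * phi x)%:E =
    (phi 1)%:E + \int[mu]_(x in `[1%R, +oo[) (phi x)%:E.
  rewrite -integral_sqr_sub1_phi_1y.
  rewrite -(@ge0_integralD_continuous _ _ _ _ _
    (continuous_mulphil _ c_sqr_sub1) continuous_phi) //=.
  - by apply: eq_integral => x _; rewrite mulrBl mul1r subrK.
  - move=> x; rewrite in_itv /= andbT => x1.
    by rewrite mulr_ge0 ?phi_ge0 // subr_ge0; nra.
  - by move=> x _; exact: phi_ge0.
have head : \int[mu]_(x in `[0%R, 1%R]) (phi x)%:E =
    (phi 1)%:E + \int[mu]_(x in `[0%R, 1%R]) (x ^+ 2 * phi x)%:E.
  rewrite -integral_1_sub_sqr_phi_01.
  rewrite -(@ge0_integralD_continuous _ _ _ _ _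
    (continuous_mulphil _ c_1_sub_sqr) continuous_sqr_phi) //=.
  - by apply: eq_integral => x _; rewrite mulrBl mul1r subrK.
  - move=> x; rewrite in_itv /= => /andP[x0 x1].
    by rewrite mulr_ge0 ?phi_ge0 // subr_ge0; nra.
rewrite -integral_phi_half.
rewrite (@ge0_integral_itv_split _ _ _ _ 1%R _ _ continuous_sqr_phi) ?bnd_simp //.
rewrite (@ge0_integral_itv_split _ _ _ _ 1%R _ _ continuous_phi phi_ge0) ?bnd_simp //.
by rewrite tail head addeA (addeC _ (phi 1)%:E).
Qed.

End gaussian_integrals.

Section second_moments_about_a_point.
Context {R : realType}.
Notation mu := (@lebesgue_measure R).

Definition sqdev_phi (t u : R) : R := (u - t) ^+ 2 * phi u.

Lemma sqdev_phi_ge0 t u : 0 <= sqdev_phi t u.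
Proof. by rewrite mulr_ge0 ?sqr_ge0 ?phi_ge0. Qed.

Lemma continuous_sqdev_phi t : continuous (sqdev_phi t).
Proof.
apply: continuous_mulphil => x.
apply: (cvg_comp (fun x => x - t) (fun x => x ^+ 2)); last exact: sqr_continuous.
by apply: (@cvgB _ R^o); [exact: cvg_id | exact: cvg_cst].
Qed.

Local Open Scope ereal_scope.

Lemma integral_sqdev_phi_0y t : (0 <= t)%R ->
  \int[mu]_(x in `[0%R, +oo[) (sqdev_phi t x)%:E =
  (2^-1 + t ^+ 2 / 2 - 2 * t * phi 0)%:E.
Proof.
move=> t0.
have : \int[mu]_(x in `[0%R, +oo[) (1 * sqdev_phi t x + (2 * t) * (x * phi x))%:E =
       \int[mu]_(x in `[0%R, +oo[) (1 * (x ^+ 2 * phi x) + t ^+ 2 * phi x)%:E.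
  by apply: eq_integral => x _; rewrite /sqdev_phi; congr EFin; ring.
rewrite (@ge0_integralD_scaled _ _ _ _ 1%R (2 * t)%R _
  (continuous_sqdev_phi t) continuous_mulphi) //=; last 3 first.
- by move=> x _; exact: sqdev_phi_ge0.
- by move=> x; rewrite in_itv /= andbT => x0; rewrite mulr_ge0 ?phi_ge0.
- by rewrite mulr_ge0.
rewrite (@ge0_integralD_scaled _ _ _ _ 1%R (t ^+ 2)%R _
  continuous_sqr_phi continuous_phi) //=; last 3 first.
- by move=> x _; rewrite mulr_ge0 ?sqr_ge0 ?phi_ge0.
- by move=> x _; exact: phi_ge0.
- exact: sqr_ge0.
rewrite !mul1e integral_mulphi integral_sqr_phi_half integral_phi_half -EFinM.
by move=> /(congr1 (fun v => v - (2 * t * phi 0)%:E)); rewrite addeK // => ->.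
Qed.

Lemma integral_sqdev_phi_Ny0 t :
  \int[mu]_(x in `]-oo, 0%R]) (sqdev_phi t x)%:E =
  \int[mu]_(x in `[0%R, +oo[) (sqdev_phi (- t) x)%:E.
Proof.
have := @ge0_integration_by_substitutionNy R (sqdev_phi t) 0.
rewrite oppr0 => -> //.
- by apply: eq_integral => x _; rewrite /= /sqdev_phi phiN; congr EFin; ring.
- exact/continuous_subspaceT/continuous_sqdev_phi.
- by move=> x _; exact: sqdev_phi_ge0.
Qed.

Lemma integral_sqdev_phi_lower_upper t :
  \int[mu]_(x in `]-oo, t]) (sqdev_phi t x)%:E +
  \int[mu]_(x in `[t, +oo[) (sqdev_phi t x)%:E = (1 + t ^+ 2)%:E.
Proof.
have split_at := @ge0_integral_itv_split _ _ -oo%O +oo%O _ _ _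
  (continuous_sqdev_phi t) (sqdev_phi_ge0 t).
rewrite -(split_at t) // (split_at 0%R) // integral_sqdev_phi_Ny0.
rewrite -(@ge0_integralD_continuous _ _ _ _ _
  (continuous_sqdev_phi (- t)) (continuous_sqdev_phi t)) //=; last 2 first.
- by move=> x _; exact: sqdev_phi_ge0.
- by move=> x _; exact: sqdev_phi_ge0.
transitivity (\int[mu]_(x in `[0%R, +oo[)
  (2 * (x ^+ 2 * phi x) + (2 * t ^+ 2) * phi x)%:E).
  by apply: eq_integral => x _; rewrite /sqdev_phi; congr EFin; ring.
rewrite (@ge0_integralD_scaled _ _ _ _ 2%R (2 * t ^+ 2)%R _
  continuous_sqr_phi continuous_phi) //=; last 3 first.
- by move=> x _; rewrite mulr_ge0 ?sqr_ge0 ?phi_ge0.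
- by move=> x _; exact: phi_ge0.
- by rewrite mulr_ge0 ?sqr_ge0.
by rewrite integral_sqr_phi_half integral_phi_half; congr EFin; field.
Qed.

Lemma integral_sqdev_phi_lower_ge t : (0 <= t)%R ->
  (2^-1)%:E <= \int[mu]_(x in `]-oo, t]) (sqdev_phi t x)%:E.
Proof.
move=> t0.
have -> : (2^-1)%:E = \int[mu]_(x in `]-oo, 0%R]) (sqdev_phi 0 x)%:E.
  by rewrite integral_sqdev_phi_Ny0 oppr0 integral_sqdev_phi_0y //; congr EFin; ring.
apply: (@le_trans _ _ (\int[mu]_(x in `]-oo, 0%R]) (sqdev_phi t x)%:E)).
- apply: ge0_le_integral => //=.
  + by move=> x _; rewrite lee_fin sqdev_phi_ge0.
  + exact: continuous_measurable_EFin (continuous_sqdev_phi 0).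
  + exact: continuous_measurable_EFin (continuous_sqdev_phi t).
  + move=> x; rewrite in_itv /= => x0.
    by rewrite lee_fin ler_wpM2r ?phi_ge0 //; nra.
- apply: ge0_subset_integral => //=.
  + exact: continuous_measurable_EFin (continuous_sqdev_phi t).
  + by move=> x _; rewrite lee_fin sqdev_phi_ge0.
  + by apply: subset_itvl; rewrite bnd_simp.
Qed.

Local Close Scope ereal_scope.

Definition lower_moment2 (t : R) := Rintegral mu `]-oo, t] (sqdev_phi t).
Definition upper_moment2 (t : R) := Rintegral mu `[t, +oo[ (sqdev_phi t).

Lemma integral_sqdev_phi_fin_num t :
  (\int[mu]_(x in `]-oo, t]) (sqdev_phi t x)%:E \is a fin_num)%E &&
  (\int[mu]_(x in `[t, +oo[) (sqdev_phi t x)%:E \is a fin_num)%E.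
Proof. by rewrite -fin_numD integral_sqdev_phi_lower_upper. Qed.

Lemma lower_moment2E t :
  (\int[mu]_(x in `]-oo, t]) (sqdev_phi t x)%:E = (lower_moment2 t)%:E)%E.
Proof. by rewrite fineK //; case/andP: (integral_sqdev_phi_fin_num t). Qed.

Lemma upper_moment2E t :
  (\int[mu]_(x in `[t, +oo[) (sqdev_phi t x)%:E = (upper_moment2 t)%:E)%E.
Proof. by rewrite fineK //; case/andP: (integral_sqdev_phi_fin_num t). Qed.

Lemma lower_moment2_ge0 t : 0 <= lower_moment2 t.
Proof. by apply: Rintegral_ge0 => x _; exact: sqdev_phi_ge0. Qed.

Lemma upper_moment2_ge0 t : 0 <= upper_moment2 t.
Proof. by apply: Rintegral_ge0 => x _; exact: sqdev_phi_ge0. Qed.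

Lemma lower_add_upper_moment2 t : lower_moment2 t + upper_moment2 t = 1 + t ^+ 2.
Proof.
apply: EFin_inj.
by rewrite EFinD -lower_moment2E -upper_moment2E integral_sqdev_phi_lower_upper.
Qed.

Lemma lower_moment2_ge_half t : 0 <= t -> 2^-1 <= lower_moment2 t.
Proof. by move=> t0; rewrite -lee_fin -lower_moment2E integral_sqdev_phi_lower_ge. Qed.

Lemma upper_moment2_le t : 0 <= t ->
  upper_moment2 t <= 2^-1 + t ^+ 2 / 2 - 2 * t * phi 0.
Proof.
move=> t0; rewrite -lee_fin -upper_moment2E -integral_sqdev_phi_0y //.
apply: ge0_subset_integral => //=.
- exact: continuous_measurable_EFin (continuous_sqdev_phi t).
- by move=> x _; rewrite lee_fin sqdev_phi_ge0.
- by apply: subset_itvr; rewrite bnd_simp.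
Qed.

Lemma upper_moment2_0 : upper_moment2 0 = 2^-1.
Proof.
apply: EFin_inj; rewrite -upper_moment2E integral_sqdev_phi_0y //.
by congr EFin; ring.
Qed.

Lemma lower_moment2_0 : lower_moment2 0 = 2^-1.
Proof.
have := lower_add_upper_moment2 (0 : R); rewrite upper_moment2_0; lra.
Qed.

End second_moments_about_a_point.

Section objective.
Context {R : realType}.
Variables N k : nat.

Lemma bin_objE (t : R) :
  bin_obj N k t = k%:R * lower_moment2 t + (N%:R - k%:R) * upper_moment2 t.
Proof. by []. Qed.

Lemma bin_obj0 : bin_obj N k 0 = N%:R / 2 :> R.
Proof. by rewrite bin_objE lower_moment2_0 upper_moment2_0; field. Qed.

(* The argument minimises the upper bound N/2 + N t^2/2 - 2 t phi(0) (N - 2k). *)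
Lemma bin_obj_lt_half : k%:R < N%:R / 2 :> R ->
  bin_obj N k (2 * phi 0 * (N%:R - 2 * k%:R) / N%:R) < N%:R / 2 :> R.
Proof.
move=> kN2.
set D : R := N%:R - 2 * k%:R; set t := 2 * phi 0 * D / N%:R.
have D0 : 0 < D by rewrite /D; lra.
have N0 : 0 < N%:R :> R by have := ler0n R k; lra.
have c0 := phi_gt0 (0 : R).
have t0 : 0 < t by rewrite /t divr_gt0 // mulr_gt0 // mulr_gt0.
have tN : t * N%:R = 2 * phi 0 * D by rewrite /t divfK // gt_eqF.
rewrite bin_objE.
have -> : lower_moment2 t = 1 + t ^+ 2 - upper_moment2 t.
  by rewrite -lower_add_upper_moment2; ring.
have : D * upper_moment2 t <= D * (2^-1 + t ^+ 2 / 2 - 2 * t * phi 0).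
  by rewrite ler_pM2l // upper_moment2_le // ltW.
have : 0 < t * phi 0 * D by rewrite mulr_gt0 // mulr_gt0.
have : t ^+ 2 * N%:R = t * (2 * phi 0 * D) by rewrite -tN; ring.
rewrite /D; lra.
Qed.

Hypothesis kN : (k <= N)%N.

Lemma bin_obj_ge0 (t : R) : 0 <= bin_obj N k t.
Proof.
by rewrite bin_objE addr_ge0 ?mulr_ge0 ?lower_moment2_ge0 ?upper_moment2_ge0
  // subr_ge0 ler_nat.
Qed.

Lemma bin_obj_ge_half (t : R) :
  N%:R / 2 <= k%:R :> R -> 0 <= t -> N%:R / 2 <= bin_obj N k t.
Proof.
move=> Nk t0; rewrite bin_objE.
have -> : upper_moment2 t = 1 + t ^+ 2 - lower_moment2 t.
  by rewrite -lower_add_upper_moment2; ring.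
have : 0 <= (N%:R - k%:R) * t ^+ 2 by rewrite mulr_ge0 ?sqr_ge0 // subr_ge0 ler_nat.
have : 0 <= (2 * k%:R - N%:R) * (lower_moment2 t - 2^-1).
  by rewrite mulr_ge0 // subr_ge0 ?lower_moment2_ge_half //; lra.
lra.
Qed.

End objective.

Section Delta_bin.
Context {R : realType}.
Variables (N k : nat).
Hypothesis kN : (k <= N)%N.

Let bin_objs := [set bin_obj N k tau | tau in [set t : R | 0 <= t]].

Let has_lbound_bin_objs : has_lbound bin_objs.
Proof. by exists 0 => _ [t _ <-]; exact: bin_obj_ge0. Qed.

Lemma Delta_bin_lt_half : k%:R < N%:R / 2 :> R -> Delta_bin N k < N%:R / 2 :> R.
Proof.
move=> kN2; apply: le_lt_trans (bin_obj_lt_half N k kN2).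
apply: ge_inf; first exact: has_lbound_bin_objs.
exists (2 * phi 0 * (N%:R - 2 * k%:R) / N%:R) => //=.
by rewrite divr_ge0 // mulr_ge0 ?mulr_ge0 ?phi_ge0 //; lra.
Qed.

Lemma Delta_bin_half : N%:R / 2 <= k%:R :> R -> Delta_bin N k = N%:R / 2 :> R.
Proof.
move=> Nk2; apply/eqP; rewrite eq_le; apply/andP; split.
  rewrite -(bin_obj0 N k); apply: ge_inf; first exact: has_lbound_bin_objs.
  by exists 0 => /=.
apply: lb_le_inf; first by exists (bin_obj N k 0); exists 0 => /=.
by move=> _ [t /= t0 <-]; exact: bin_obj_ge_half.
Qed.

End Delta_bin.

Theorem proposition2p8 (R : realType) (N : nat) :
  (forall k : nat, (k <= N)%N -> (k%:R < N%:R / 2 :> R) ->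
     Delta_bin N k < N%:R / 2 :> R) /\
  (forall k : nat, (k <= N)%N -> (N%:R / 2 <= k%:R :> R) ->
     Delta_bin N k = N%:R / 2 :> R).
Proof. by split=> k kN; [exact: Delta_bin_lt_half | exact: Delta_bin_half]. Qed.
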